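(* Let $n$ be a positive integer. A UC-move is realized by a sequence of $V^{n}$-moves and welded Reidemeister moves if and only if $n=1$.
   Context: A virtual link diagram is the image of an immersion of finitely many ordered, oriented circles in the plane with transverse double points, each a classical crossing (with over/under information) or a virtual crossing. Welded Reidemeister moves are R1–R3, the virtual moves VR1–VR3 (Reidemeister moves with only virtual crossings) and VR4 (a strand with only virtual crossings slides past a classical crossing), and the OC move (a strand passing over two other strands at classical crossings, those two strands crossing each other virtually, may be slid across that virtual crossing). The UC move is the same as OC with ''over'' replaced by ''under''. The $V^{n}$-move: inside a disk the diagram consists of two arcs $a,b$ oriented in the same direction; on one side they are parallel without crossings; on the other side the tangle is the $2$-braid word $(\sigma\tau)^{n}$, where $\sigma$ is a classical crossing with $b$ over $a$ and $\tau$ a virtual crossing (so $n$ classical crossings, all with $b$ over and of the same sign, alternating with $n$ virtual crossings). The move replaces one side by the other. (The $V^{1}$-move is equivalent to crossing virtualization, which replaces a classical crossing by a virtual one.) *)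

(* Virtual link diagrams modulo planar isotopy and the
   virtual moves VR1-VR4 are encoded by Gauss diagrams. *)
From Stdlib Require Import Relations.
From mathcomp Require Import all_boot.

Set Implicit Arguments.
Unset Strict Implicit.
Unset Printing Implicit Defensive.

(* An endpoint of an arrow (= classical crossing): (crossing id, is the
   over-crossing endpoint?, sign of the crossing (true = positive)). *)
Definition letter := (nat * bool * bool)%type.
Definition lid (x : letter) : nat := x.1.1.
Definition lover (x : letter) : bool := x.1.2.
Definition lsgn (x : letter) : bool := x.2.

(* A Gauss diagram: ordered list of components; each component is the cyclic
   word (read from a base point, in the direction of orientation) of the
   classical crossings met along it. *)
Definition gdiag := seq (seq letter).

Definition ids (D : gdiag) : seq nat := map lid (flatten D).

Definition gauss_wf (D : gdiag) : Prop :=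
  forall i, i \in ids D ->
    count (fun x => (lid x == i) && lover x) (flatten D) = 1 /\
    count (fun x => (lid x == i) && ~~ lover x) (flatten D) = 1 /\
    (forall x y, x \in flatten D -> y \in flatten D ->
       lid x = i -> lid y = i -> lsgn x = lsgn y).

(* Templates: diagrams with numbered holes, used to describe local moves. *)
Definition tentry := (letter + nat)%type.
Definition template := seq (seq tentry).

Definition fill (T : template) (ws : seq (seq letter)) : gdiag :=
  map (fun c => flatten (map (fun e : tentry =>
         match e with inl x => [:: x] | inr k => nth [::] ws k end) c)) T.

Definition erase (T : template) : gdiag := fill T [::].

Definition holes_ok (T : template) (k : nat) : Prop :=
  (forall h, h < k -> count (pred1 (inr h : tentry)) (flatten T) = 1) /\
  (forall h, (inr h : tentry) \in flatten T -> h < k).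

Definition fresh (T : template) (l : seq nat) : Prop :=
  uniq l /\ all (fun i => i \notin ids (erase T)) l.

Definition ord2 (c : bool) (x y : letter) : seq letter :=
  if c then [:: x; y] else [:: y; x].

Definition rot_move (D D' : gdiag) : Prop :=
  exists D1 D2 c k, D = D1 ++ c :: D2 /\ D' = D1 ++ rot k c :: D2.

Definition relabel_move (D D' : gdiag) : Prop :=
  exists f : nat -> nat, injective f /\
    D' = map (map (fun x => (f (lid x), lover x, lsgn x))) D.

Definition R1_move (D D' : gdiag) : Prop :=
  exists T i o s, holes_ok T 1 /\ fresh T [:: i] /\
    D = fill T [:: [::]] /\ D' = fill T [:: [:: (i, o, s); (i, ~~ o, s)]].

Definition R2_move (D D' : gdiag) : Prop :=
  exists T i j s (rv : bool), holes_ok T 2 /\ fresh T [:: i; j] /\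
    D = fill T [:: [::]; [::]] /\
    D' = fill T [:: [:: (i, true, s); (j, true, ~~ s)];
                    if rv then [:: (j, false, ~~ s); (i, false, s)]
                          else [:: (i, false, s); (j, false, ~~ s)]].

(* strands: top carries over-ends of i (top/mid) and j (top/bot); middle
   carries the under-end of i and over-end of k (mid/bot); bottom carries the
   under-ends of j and k.  t, m, b record the order on each strand. *)
Definition r3_words (i j k : nat) (si sj sk t m b : bool) : seq (seq letter) :=
  [:: ord2 t (i, true, si) (j, true, sj);
      ord2 m (i, false, si) (k, true, sk);
      ord2 b (j, false, sj) (k, false, sk)].

Definition R3_move (D D' : gdiag) : Prop :=
  exists T i j k si sj sk t m b, holes_ok T 3 /\ fresh T [:: i; j; k] /\
    (si == sj) = (m == b) /\ (si == sk) = (t == b) /\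
    D = fill T (r3_words i j k si sj sk t m b) /\
    D' = fill T (r3_words i j k si sj sk (~~ t) (~~ m) (~~ b)).

Definition OC_move (D D' : gdiag) : Prop :=
  exists T (x y : letter), holes_ok T 1 /\ lover x /\ lover y /\
    lid x != lid y /\ D = fill T [:: [:: x; y]] /\ D' = fill T [:: [:: y; x]].

Definition UC_move (D D' : gdiag) : Prop :=
  exists T (x y : letter), holes_ok T 1 /\ ~~ lover x /\ ~~ lover y /\
    lid x != lid y /\ D = fill T [:: [:: x; y]] /\ D' = fill T [:: [:: y; x]].

(* V^n: n parallel crossings, same sign, arc b over arc a, in the same
   order along both arcs. *)
Definition Vn_move (n : nat) (D D' : gdiag) : Prop :=
  exists T s (l : seq nat), holes_ok T 2 /\ size l = n /\ fresh T l /\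
    D = fill T [:: [::]; [::]] /\
    D' = fill T [:: [seq (i, true, s) | i <- l]; [seq (i, false, s) | i <- l]].

Definition wVn_step (n : nat) (D D' : gdiag) : Prop :=
  gauss_wf D /\ gauss_wf D' /\
  (rot_move D D' \/ relabel_move D D' \/ R1_move D D' \/ R2_move D D' \/
   R3_move D D' \/ OC_move D D' \/ Vn_move n D D').

Definition UC_step (D D' : gdiag) : Prop :=
  gauss_wf D /\ gauss_wf D' /\ UC_move D D'.

Definition UC_realized_by_wVn (n : nat) : Prop :=
  forall D D', UC_step D D' -> clos_refl_sym_trans gdiag (wVn_step n) D D'.

(* Color the arcs of a Gauss diagram by a set with one binary operation [op s]
   for each crossing sign [s]: an arc keeps its color through over-crossings,
   and its color [x] becomes [op s x y] when it passes under an over-arc of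
   color [y].  If the [op s] satisfy the quandle axioms ([op s x x = x],
   [op (~~ s) _ y] inverts [op s _ y], right self-distributivity), the
   existence of a non-monochrome coloring is invariant under the welded moves;
   OC is harmless because colors do not change at over-crossings.  If
   moreover passing [n] times under the same color is the identity, it is
   invariant under V^n-moves as well.  For [n > 1] the Alexander quandle
   [op s x y = t^(+-1) x + (1 - t^(+-1)) y] over Z/(2^n - 1) with [t = 2] has
   [t^n = 1], and it colors non-trivially only one side of a UC-move between
   two explicit three-component diagrams.  For [n = 1] a V^1-move deletes the
   crossing whose under-endpoint the UC-move displaces, and a second one
   reinserts it on the other side of the neighbouring under-endpoint. *)

From Stdlib Require Import Relations.
From mathcomp Require Import all_boot all_algebra ring.

Set Implicit Arguments.
Unset Strict Implicit.
Unset Printing Implicit Defensive.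

Lemma count_cat_cons (A : eqType) (x : A) pre post :
  count (pred1 x) (pre ++ x :: post) = (count (pred1 x) pre + count (pred1 x) post).+1.
Proof. by rewrite count_cat /= eqxx addnS. Qed.

Lemma eq_cat_cons_notin (A : eqType) (x : A) pre post pre' post' :
  x \notin pre -> x \notin pre' -> pre ++ x :: post = pre' ++ x :: post' -> pre = pre'.
Proof.
elim: pre pre' => [|a pre IH] [|b pre'] //=.
- by move=> _ /[swap] -[->]; rewrite mem_head.
- by move=> /[swap] _ /[swap] -[->]; rewrite mem_head.
- rewrite !inE => /norP [_ Hpre] /norP [_ Hpre'] [-> E].
  by rewrite (IH pre').
Qed.

Lemma flatten_occurs_once (A : eqType) (s : seq (seq A)) (x : A) j j' pre post pre' post' :
  count (pred1 x) (flatten s) = 1 -> j < size s -> j' < size s ->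
  nth [::] s j = pre ++ x :: post -> nth [::] s j' = pre' ++ x :: post' ->
  j = j' /\ pre = pre'.
Proof.
have count_pos (t : seq A) pr po : t = pr ++ x :: po -> 0 < count (pred1 x) t.
  by move=> ->; rewrite -has_count has_pred1 mem_cat mem_head orbT.
have count_flatten_pos (s' : seq (seq A)) i pr po :
    i < size s' -> nth [::] s' i = pr ++ x :: po -> 0 < count (pred1 x) (flatten s').
  move=> Hi /count_pos; rewrite -!has_count !has_pred1 => Hx.
  by apply/flattenP; exists (nth [::] s' i); rewrite ?mem_nth.
have not_both (a b : nat) : 0 < a -> 0 < b -> a + b = 1 -> False.
  by move=> Ha Hb Hab; have := leq_add Ha Hb; rewrite Hab.
elim: s j j' => // t s IH [|j] [|j'] /=; rewrite count_cat ?ltnS => Hc Hj Hj' Ht Ht'.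
- have notin_pre pr po : t = pr ++ x :: po -> x \notin pr.
    move=> E; have : count (pred1 x) t <= 1 by rewrite -Hc leq_addr.
    by rewrite E count_cat_cons ltnS leqn0 addn_eq0 => /andP [/eqP /count_memPn].
  split=> //; apply: eq_cat_cons_notin (notin_pre _ _ Ht) (notin_pre _ _ Ht') _.
  exact: etrans (esym Ht) Ht'.
- by case: (not_both _ _ (count_pos _ _ _ Ht) (count_flatten_pos _ _ _ _ Hj' Ht') Hc).
- by case: (not_both _ _ (count_pos _ _ _ Ht') (count_flatten_pos _ _ _ _ Hj Ht) Hc).
- have Hs : count (pred1 x) (flatten s) = 1.
    move: Hc (count_flatten_pos _ _ _ _ Hj Ht); case: (count (pred1 x) t) => // k.
    by rewrite addSn => -[/eqP]; rewrite addn_eq0 => /andP [_ /eqP ->].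
  by case: (IH j j' Hs Hj Hj' Ht Ht') => -> ->.
Qed.

Lemma count_flatten_map (A : eqType) (B : Type) (g : A -> seq B) (p : pred B) (q : pred A) s :
  {in s, forall e, count p (g e) = q e} -> count p (flatten (map g s)) = count q s.
Proof.
by move=> H; rewrite count_flatten -map_comp -sumn_count; congr sumn; apply/eq_in_map.
Qed.

Lemma count_flatten_map_mem (A : eqType) (B : Type) (g : A -> seq B) (p : pred B) s e :
  e \in s -> count p (g e) <= count p (flatten (map g s)).
Proof.
elim: s => //= e' s IH; rewrite inE count_cat => /orP [/eqP ->|/IH H]; first exact: leq_addr.
exact: leq_trans H (leq_addl _ _).
Qed.

Lemma count_flatten_map2 (A : eqType) (B : Type) (g : A -> seq B) (p : pred B) s e1 e2 :
  e1 \in s -> e2 \in s -> e1 != e2 ->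
  count p (g e1) + count p (g e2) <= count p (flatten (map g s)).
Proof.
elim: s => //= e s IH; rewrite !inE count_cat => /orP [/eqP ->|H1] /orP [/eqP ->|H2] Hne.
- by rewrite eqxx in Hne.
- by rewrite leq_add2l count_flatten_map_mem.
- by rewrite addnC leq_add2l count_flatten_map_mem.
- exact: leq_trans (IH H1 H2 Hne) (leq_addl _ _).
Qed.

Lemma flatten_map_flatten (A B : Type) (g : A -> seq B) (s : seq (seq A)) :
  flatten (map (fun t => flatten (map g t)) s) = flatten (map g (flatten s)).
Proof. by elim: s => //= t s IH; rewrite IH map_cat flatten_cat. Qed.

Lemma nth_cat_cons_other (A : Type) (x0 : A) s1 s2 w w' q : q != size s1 ->
  nth x0 (s1 ++ w :: s2) q = nth x0 (s1 ++ w' :: s2) q.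
Proof.
move=> Hq; rewrite !nth_cat; case: ltnP => // H.
by case E: (q - size s1) => [|q'] //; move: Hq; rewrite eqn_leq H andbT -subn_eq0 E.
Qed.

Lemma mem_flatten_rot (A : eqType) (s1 s2 : seq (seq A)) w r x :
  (x \in flatten (s1 ++ rot r w :: s2)) = (x \in flatten (s1 ++ w :: s2)).
Proof.
by rewrite !flatten_cat /= !mem_cat [(_ \in drop r w) || _]orbC -mem_cat cat_take_drop.
Qed.

Lemma letterE (w : letter) : w = (lid w, lover w, lsgn w).
Proof. by case: w => [[]]. Qed.

Lemma all_ord2 (p : pred letter) t x y : all p (ord2 t x y) = p x && p y.
Proof. by case: t; rewrite /= andbT // andbC. Qed.

Lemma mem_ord2 t x y l : (l \in ord2 t x y) = (l == x) || (l == y).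
Proof. by case: t; rewrite !inE // orbC. Qed.

Definition relabel (f : nat -> nat) (x : letter) : letter := (f (lid x), lover x, lsgn x).

Lemma ids_relabel f D : ids (map (map (relabel f)) D) = map f (ids D).
Proof. by rewrite /ids -map_flatten -!map_comp. Qed.

Lemma gauss_wf_filter D i : gauss_wf D -> gauss_wf (map (filter (fun l => lid l != i)) D).
Proof.
move=> H j; rewrite /ids -filter_flatten => /mapP [l]; rewrite mem_filter => /andP [Hli Hl] Ej.
subst j; have [H1 [H2 H3]] := H _ (map_f lid Hl).
split; [|split].
- by rewrite count_filter -H1; apply: eq_count => x /=; case: eqP => // ->; rewrite Hli andbT.
- by rewrite count_filter -H2; apply: eq_count => x /=; case: eqP => // ->; rewrite Hli andbT.
- by move=> x y; rewrite !mem_filter => /andP [_ Hx] /andP [_ Hy]; apply: H3.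
Qed.

Definition fill_entry (ws : seq (seq letter)) (e : tentry) : seq letter :=
  match e with inl x => [:: x] | inr k => nth [::] ws k end.

Definition fill_comp (ws : seq (seq letter)) (t : seq tentry) : seq letter :=
  flatten (map (fill_entry ws) t).

Lemma fillE T ws : fill T ws = map (fill_comp ws) T.
Proof. by []. Qed.

Lemma fill_comp_cat ws t1 t2 :
  fill_comp ws (t1 ++ t2) = fill_comp ws t1 ++ fill_comp ws t2.
Proof. by rewrite /fill_comp map_cat flatten_cat. Qed.

Lemma fill_comp_cons ws e t :
  fill_comp ws (e :: t) = fill_entry ws e ++ fill_comp ws t.
Proof. by []. Qed.

Lemma size_fill T ws : size (fill T ws) = size T.
Proof. exact: size_map. Qed.

Lemma nth_fill T ws j :
  j < size T -> nth [::] (fill T ws) j = fill_comp ws (nth [::] T j).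
Proof. by move=> Hj; rewrite fillE (nth_map [::]). Qed.

Lemma flatten_fill T ws :
  flatten (fill T ws) = flatten (map (fill_entry ws) (flatten T)).
Proof. exact: flatten_map_flatten. Qed.

Lemma mem_fill T ws l : l \in flatten (fill T ws) ->
  inl l \in flatten T \/ exists2 k, inr k \in flatten T & l \in nth [::] ws k.
Proof.
rewrite flatten_fill => /flatten_mapP [[x|k] He] /=; last by right; exists k.
by rewrite inE => /eqP ->; left.
Qed.

Lemma mem_fill_letter T ws l : inl l \in flatten T -> l \in flatten (fill T ws).
Proof.
by move=> Hl; rewrite flatten_fill; apply/flatten_mapP; exists (inl l); rewrite //= inE.
Qed.

Lemma mem_fill_hole T ws k l :
  inr k \in flatten T -> l \in nth [::] ws k -> l \in flatten (fill T ws).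
Proof. by move=> Hk Hl; rewrite flatten_fill; apply/flatten_mapP; exists (inr k). Qed.

Lemma mem_fill_comp T ws j l :
  j < size T -> l \in fill_comp ws (nth [::] T j) -> l \in flatten (fill T ws).
Proof.
move=> Hj Hl; apply/flattenP; exists (nth [::] (fill T ws) j); last by rewrite nth_fill.
by rewrite mem_nth ?size_fill.
Qed.

Lemma holes_ok_mem T h k : holes_ok T h -> (inr k \in flatten T) = (k < h).
Proof.
case=> Hc Hh; apply/idP/idP => [/Hh //|/Hc Hk].
by rewrite -has_pred1 has_count Hk.
Qed.

Lemma fresh_letter T l x : fresh T l -> inl x \in flatten T -> lid x \notin l.
Proof.
case=> _ /allP Hl Hx; apply/negP => /Hl; rewrite /ids.
by rewrite (map_f lid (mem_fill_letter [::] Hx)).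
Qed.

Lemma nth_empty_holes m k : nth [::] (nseq m ([::] : seq letter)) k = [::].
Proof. by rewrite nth_nseq if_same. Qed.

Definition tsub (g : tentry -> seq tentry) (T : template) : template :=
  map (fun t => flatten (map g t)) T.

Lemma flatten_tsub g T : flatten (tsub g T) = flatten (map g (flatten T)).
Proof. exact: flatten_map_flatten. Qed.

Lemma fill_tsub g T ws :
  fill (tsub g T) ws = map (fun t => flatten (map (fill_comp ws \o g) t)) T.
Proof.
rewrite fillE -map_comp; apply/eq_map => t /=.
by elim: t => //= e t IH; rewrite fill_comp_cat IH.
Qed.

Section Colorings.
Variable X : eqType.
Variable op : bool -> X -> X -> X.

(* [c i] is the color of the over-arc of crossing [i], and [a k] the color of
   component [k] at its base point. *)
Fixpoint walk (c : nat -> X) (w : seq letter) (x : X) : option X :=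
  match w with
  | [::] => Some x
  | l :: w' => if lover l then (if x == c (lid l) then walk c w' x else None)
               else walk c w' (op (lsgn l) x (c (lid l)))
  end.

Definition coloring c (a : nat -> X) (D : gdiag) :=
  forall k, k < size D -> walk c (nth [::] D k) (a k) = Some (a k).

Definition monochrome c (a : nat -> X) (D : gdiag) :=
  exists z, (forall k, k < size D -> a k = z) /\ (forall i, i \in ids D -> c i = z).

Definition colorable (D : gdiag) :=
  exists c a, coloring c a D /\ ~ monochrome c a D.

Lemma walk_cat c w1 w2 x : walk c (w1 ++ w2) x = obind (walk c w2) (walk c w1 x).
Proof.
elim: w1 x => //= l w1 IH x; case: (lover l); last by rewrite IH.
by case: eqP.
Qed.

Lemma eq_in_walk c1 c2 w x : {in w, forall l, c1 (lid l) = c2 (lid l)} ->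
  walk c1 w x = walk c2 w x.
Proof.
elim: w x => //= l w IH x H.
have Hw : {in w, forall l, c1 (lid l) = c2 (lid l)}.
  by move=> l' Hl'; apply: H; rewrite inE Hl' orbT.
by rewrite H ?mem_head // !(IH _ Hw).
Qed.

Lemma walk_over c w y : all lover w ->
  walk c w y = if all (fun l => c (lid l) == y) w then Some y else None.
Proof.
elim: w => //= l w IH /andP [-> Hw]; rewrite IH // eq_sym.
by case: (c (lid l) == y).
Qed.

Lemma walk_relabel c f w x : walk c (map (relabel f) w) x = walk (c \o f) w x.
Proof.
elim: w x => [|l w IH] x //=.
by rewrite /relabel /lid /lover /lsgn /=; case: (l.1.2); rewrite IH.
Qed.

Hypothesis opI : forall s x, op s x x = x.

Lemma walk_monochrome c w z : {in w, forall l, c (lid l) = z} -> walk c w z = Some z.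
Proof.
elim: w => //= l w IH H; rewrite H ?mem_head // opI eqxx.
by case: (lover l); apply: IH => l' Hl'; apply: H; rewrite inE Hl' orbT.
Qed.

Lemma eq_walk_fill_comp c1 c2 ws1 ws2 t x :
  (forall l, inl l \in t -> c1 (lid l) = c2 (lid l)) ->
  (forall pre k post y, t = pre ++ inr k :: post ->
     walk c1 (fill_comp ws1 pre) x = Some y ->
     walk c1 (nth [::] ws1 k) y = walk c2 (nth [::] ws2 k) y) ->
  walk c1 (fill_comp ws1 t) x = walk c2 (fill_comp ws2 t) x.
Proof.
elim: t x => //= e t IH x Hl Hh.
rewrite !fill_comp_cons !walk_cat.
have <- : walk c1 (fill_entry ws1 e) x = walk c2 (fill_entry ws2 e) x.
  case: e Hl Hh => [l|k] Hl Hh /=; first by rewrite Hl ?mem_head.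
  exact: (Hh [::] k t x).
case E: (walk c1 (fill_entry ws1 e) x) => [x'|] //=.
apply: IH => [l Hl'|pre k post y Ht Hy]; first by apply: Hl; rewrite inE Hl' orbT.
apply: (Hh (e :: pre) k post y); first by rewrite Ht.
by rewrite fill_comp_cons walk_cat E.
Qed.

Definition hole_color c a (T : template) ws k y := exists j pre post,
  [/\ j < size T, nth [::] T j = pre ++ inr k :: post &
      walk c (fill_comp ws pre) (a j) = Some y].

Lemma hole_color_mem c a T ws k y : hole_color c a T ws k y -> inr k \in flatten T.
Proof.
case=> j [pre [post [Hj Ht _]]]; apply/flattenP; exists (nth [::] T j).
  exact: mem_nth.
by rewrite Ht mem_cat mem_head orbT.
Qed.

Lemma hole_color_lt c a T ws h k y :
  holes_ok T h -> hole_color c a T ws k y -> k < h.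
Proof. by move=> Hh /hole_color_mem; rewrite (holes_ok_mem _ Hh). Qed.

Lemma hole_color_walk c a T ws k y :
  coloring c a (fill T ws) -> hole_color c a T ws k y ->
  exists y', walk c (nth [::] ws k) y = Some y'.
Proof.
move=> Hc [j [pre [post [Hj Ht Hy]]]]; have := Hc j.
rewrite size_fill nth_fill // Ht fill_comp_cat fill_comp_cons !walk_cat Hy /= walk_cat.
by case: (walk c (nth [::] ws k) y) => [y' _|/(_ Hj)//]; exists y'.
Qed.

Lemma hole_color_exists c a T ws k :
  coloring c a (fill T ws) -> inr k \in flatten T -> exists y, hole_color c a T ws k y.
Proof.
move=> Hc /flattenP [t Ht Hk].
have Hj : index t T < size T by rewrite index_mem.
have Et : t = take (index (inr k) t) t ++ inr k :: drop (index (inr k) t).+1 t.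
  by rewrite -{1}(cat_take_drop (index (inr k) t) t) (drop_nth (inr k)) ?index_mem ?nth_index.
have := Hc (index t T); rewrite size_fill nth_fill // nth_index // => /(_ Hj).
rewrite {1}Et fill_comp_cat walk_cat; case E: (walk c _ _) => [y|//] _.
exists y, (index t T), (take (index (inr k) t) t), (drop (index (inr k) t).+1 t).
by rewrite nth_index -?Et.
Qed.

Lemma hole_color_uniq c a T ws k y y' :
  count (pred1 (inr k)) (flatten T) = 1 ->
  hole_color c a T ws k y -> hole_color c a T ws k y' -> y = y'.
Proof.
move=> Hc [j [pre [post [Hj Ht Hy]]]] [j' [pre' [post' [Hj' Ht' Hy']]]].
case: (flatten_occurs_once Hc Hj Hj' Ht Ht') => Ej Epre; subst j' pre'.
by move: Hy'; rewrite Hy => -[].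
Qed.

Lemma holes_ok_hole_color c a T ws h k :
  coloring c a (fill T ws) -> holes_ok T h -> k < h ->
  exists y, hole_color c a T ws k y /\ forall y', hole_color c a T ws k y' -> y' = y.
Proof.
move=> Hc Hh Hk; have [y Hy] := hole_color_exists Hc (etrans (holes_ok_mem _ Hh) Hk).
exists y; split=> // y' Hy'; apply: hole_color_uniq Hy' Hy.
by case: Hh => /(_ k Hk).
Qed.

Lemma hole_color_monochrome c a T ws k y z :
  (forall k, k < size T -> a k = z) -> (forall i, i \in ids (fill T ws) -> c i = z) ->
  hole_color c a T ws k y -> y = z.
Proof.
move=> Ha Hc [j [pre [post [Hj Ht Hy]]]]; move: Hy; rewrite Ha // walk_monochrome.
  by case.
move=> l Hl; apply/Hc/mapP; exists l => //; apply: (mem_fill_comp Hj).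
by rewrite Ht fill_comp_cat mem_cat Hl.
Qed.

Section Transfer.
Variables (c1 c2 a : nat -> X) (T : template) (ws1 ws2 : seq (seq letter)).
Hypothesis agree_letters : forall l, inl l \in flatten T -> c1 (lid l) = c2 (lid l).
Hypothesis agree_holes : forall k y, hole_color c1 a T ws1 k y ->
  walk c1 (nth [::] ws1 k) y = walk c2 (nth [::] ws2 k) y.

Lemma coloring_fill : coloring c1 a (fill T ws1) -> coloring c2 a (fill T ws2).
Proof.
move=> Hc j; rewrite size_fill => Hj.
rewrite nth_fill // -(eq_walk_fill_comp (c1 := c1) (ws1 := ws1)).
- by rewrite -nth_fill // Hc ?size_fill.
- move=> l Hl; apply: agree_letters; apply/flattenP; exists (nth [::] T j) => //.
  exact: mem_nth.
- by move=> pre k post y Ht Hy; apply: agree_holes; exists j, pre, post.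
Qed.

Lemma hole_color_transfer k y : hole_color c1 a T ws1 k y -> hole_color c2 a T ws2 k y.
Proof.
move=> [j [pre [post [Hj Ht Hy]]]]; exists j, pre, post; split=> //.
rewrite -Hy; symmetry; apply: eq_walk_fill_comp => [l Hl|pre' k' post' y' Hp Hy'].
  apply: agree_letters; apply/flattenP; exists (nth [::] T j); first exact: mem_nth.
  by rewrite Ht mem_cat Hl.
by apply: agree_holes; exists j, pre', (post' ++ inr k :: post); rewrite Ht Hp -catA.
Qed.

(* The last hypothesis lets a monochrome coloring of [fill T ws2] be pulled
   back to a monochrome coloring of [fill T ws1]. *)
Lemma colorable_fill :
  coloring c1 a (fill T ws1) -> ~ monochrome c1 a (fill T ws1) ->
  (forall z, (forall k y, hole_color c1 a T ws1 k y -> y = z) ->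
     forall k l, inr k \in flatten T -> l \in nth [::] ws1 k -> c1 (lid l) = z) ->
  colorable (fill T ws2).
Proof.
move=> Hc Hnm Hz; exists c2, a; split; first exact: coloring_fill.
move=> [z [Ha Hc2]]; apply: Hnm; exists z; split.
  by move=> k; rewrite !size_fill => Hk; apply: Ha; rewrite size_fill.
have Hhole k y : hole_color c1 a T ws1 k y -> y = z.
  move=> /hole_color_transfer; apply: hole_color_monochrome Hc2.
  by move=> k' Hk'; apply: Ha; rewrite size_fill.
move=> i /mapP [l Hl ->]; case: (mem_fill Hl) => [HlT|[k Hk Hlk]].
  by rewrite agree_letters //; apply/Hc2/mapP; exists l => //; apply: mem_fill_letter.
exact: Hz Hhole k l Hk Hlk.
Qed.

End Transfer.

Lemma colorable_rot_forward D1 D2 w r :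
  colorable (D1 ++ w :: D2) -> colorable (D1 ++ rot r w :: D2).
Proof.
move=> [c [a [Hv Hnm]]]; set p := size D1.
have Hp : p < size (D1 ++ w :: D2) by rewrite size_cat /= addnS ltnS leq_addr.
have Hsz : size (D1 ++ rot r w :: D2) = size (D1 ++ w :: D2) by rewrite !size_cat.
have := Hv p Hp; rewrite nth_cat ltnn subnn /= -{1}(cat_take_drop r w) walk_cat.
case Ey: (walk c (take r w) (a p)) => [y|//] /= Hd.
exists c, (fun q => if q == p then y else a q); split.
  move=> q; rewrite Hsz; case: eqP => [->|/eqP Hqp] Hq.
    by rewrite nth_cat ltnn subnn /rot walk_cat Hd /= Ey.
  by rewrite (nth_cat_cons_other _ _ _ w) // Hv.
move=> [z [Ha Hc]]; apply: Hnm; exists z; split.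
  move=> q Hq; have := Ha q; rewrite Hsz eq_sym => /(_ Hq).
  case: eqP => [<- Hy|//]; move: Hd; rewrite Hy walk_monochrome => [[] //|l Hl].
  apply/Hc/mapP; exists l => //; rewrite mem_flatten_rot flatten_cat mem_cat /= mem_cat.
  by rewrite -{1}(cat_take_drop r w) mem_cat Hl !orbT.
by move=> i /mapP [l Hl ->]; apply/Hc/mapP; exists l; rewrite ?mem_flatten_rot.
Qed.

Lemma colorable_rot D D' : rot_move D D' -> colorable D <-> colorable D'.
Proof.
move=> [D1 [D2 [w [r [-> ->]]]]]; split; first exact: colorable_rot_forward.
by move=> /(colorable_rot_forward (size (rot r w) - r)); rewrite -/(rotr r _) rotK.
Qed.

Lemma colorable_relabel D D' : relabel_move D D' -> colorable D <-> colorable D'.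
Proof.
move=> [f [Hf ->]]; rewrite -/(map (map (relabel f)) D).
split=> -[c [a [Hv Hnm]]]; last first.
  exists (c \o f), a; split.
    by move=> k Hk; rewrite -walk_relabel -(nth_map [::] [::]) // Hv ?size_map.
  move=> [z [Ha Hc]]; apply: Hnm; exists z; split.
    by move=> k Hk; apply: Ha; rewrite size_map in Hk.
  by move=> i; rewrite ids_relabel => /mapP [i' Hi' ->]; apply: Hc.
pose c' j := if [seq i <- ids D | f i == j] is i :: _ then c i else c 0.
have Hc' : {in ids D, forall i, c' (f i) = c i}.
  move=> i Hi; rewrite /c'.
  have : i \in [seq i' <- ids D | f i' == f i] by rewrite mem_filter eqxx Hi.
  case: [seq _ <- _ | _] (filter_all (fun i' => f i' == f i) (ids D)) => //= i' s.
  by case/andP => /eqP /Hf ->.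
exists c', a; split.
  move=> k; rewrite size_map => Hk; rewrite (nth_map [::]) // walk_relabel -(Hv k Hk).
  apply: eq_in_walk => l Hl; apply: Hc'; apply/mapP; exists l => //.
  by apply/flattenP; exists (nth [::] D k); rewrite ?mem_nth.
move=> [z [Ha Hc]]; apply: Hnm; exists z; split.
  by move=> k Hk; apply: Ha; rewrite size_map.
by move=> i Hi; rewrite -Hc' // Hc // ids_relabel map_f.
Qed.

Hypothesis opK : forall s x y, op (~~ s) (op s x y) y = x.

Lemma opNK s x y : op s (op (~~ s) x y) y = x.
Proof. by rewrite -{1}(negbK s) opK. Qed.

Lemma walk_kink c i o s y y' : walk c [:: (i, o, s); (i, ~~ o, s)] y = Some y' ->
  c i = y /\ y' = y.
Proof.
case: o => /=; rewrite /lid /lover /lsgn /=; first by case: eqP => // -> [<-]; rewrite opI.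
case: eqP => // E [<-]; have Ey : c i = y by rewrite -(opK s y (c i)) E opI.
by rewrite E Ey.
Qed.

Lemma colorable_R1 D D' : R1_move D D' -> colorable D <-> colorable D'.
Proof.
move=> [T [i [o [s [Hh [Hf [-> ->]]]]]]]; split=> -[c [a [Hv Hnm]]];
  have [y0 [Hy0 Hu]] := holes_ok_hole_color Hv Hh (ltn0Sn 0).
- apply: (colorable_fill (c2 := fun j => if j == i then y0 else c j) _ _ Hv Hnm).
  + by move=> l /(fresh_letter Hf); rewrite inE => /negPf ->.
  + move=> k y Hk; have := hole_color_lt Hh Hk; case: k Hk => // Hk _.
    by rewrite (Hu _ Hk) /= /lid /lover /lsgn /= eqxx; case: o; rewrite /= ?opI eqxx.
  + by move=> z _ k l _; rewrite (nth_empty_holes 1).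
- have [y1 Hy1] := hole_color_walk Hv Hy0; have [Ec Ey1] := walk_kink Hy1.
  apply: (colorable_fill (c2 := c) _ _ Hv Hnm) => //.
  + move=> k y Hk; have := hole_color_lt Hh Hk; case: k Hk => // Hk _.
    by rewrite (Hu _ Hk) Hy1 Ey1.
  + move=> z Hz [|k] l Hk /=; last by rewrite nth_nil.
    by rewrite !inE => /orP [] /eqP -> /=; rewrite Ec (Hz _ _ Hy0).
Qed.

Lemma walk_R2_under c i j s (rv : bool) y : c i = c j ->
  walk c (if rv then [:: (j, false, ~~ s); (i, false, s)]
          else [:: (i, false, s); (j, false, ~~ s)]) y = Some y.
Proof. by move=> E; case: rv; rewrite /= /lid /lsgn /= E ?opK ?opNK. Qed.

Lemma colorable_R2 D D' : R2_move D D' -> colorable D <-> colorable D'.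
Proof.
move=> [T [i [j [s [rv [Hh [Hf [-> ->]]]]]]]]; split=> -[c [a [Hv Hnm]]];
  have [y0 [Hy0 Hu]] := holes_ok_hole_color Hv Hh (ltn0Sn 1).
- apply: (colorable_fill (c2 := fun j' => if j' \in [:: i; j] then y0 else c j') _ _ Hv Hnm).
  + by move=> l /(fresh_letter Hf) /negPf ->.
  + move=> k y Hk; have := hole_color_lt Hh Hk; case: k Hk => [|[|]] // Hk _.
      by rewrite (Hu _ Hk) /= /lid /= !inE !eqxx ?orbT /= eqxx.
    by rewrite (nth_empty_holes 2) /= walk_R2_under // !inE !eqxx ?orbT.
  + by move=> z _ k l _; rewrite (nth_empty_holes 2).
- have [y1] := hole_color_walk Hv Hy0; rewrite walk_over //= /lid /=.
  case: eqP => // Eci; case: eqP => // Ecj _.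
  apply: (colorable_fill (c2 := c) _ _ Hv Hnm) => //.
  + move=> k y Hk; have := hole_color_lt Hh Hk; case: k Hk => [|[|]] // Hk _.
      by rewrite (Hu _ Hk) walk_over //= /lid /= Eci Ecj eqxx.
    by rewrite (nth_empty_holes 2) /= walk_R2_under // Eci Ecj.
  + move=> z Hz k l Hk; rewrite (Hz _ _ Hy0) in Eci Ecj.
    case: k Hk => [|[|k]] Hk /=; last by rewrite nth_nil.
      by rewrite !inE => /orP [] /eqP -> /=.
    by case: (rv); rewrite !inE => /orP [] /eqP -> /=.
Qed.

Hypothesis opD : forall d e x z y, op e (op d x z) y = op d (op e x y) (op e z y).

Lemma walk_R3_mid c m i k si sk y :
  walk c (ord2 m (i, false, si) (k, true, sk)) y =
  if c k == (if m then op si y (c i) else y) then Some (op si y (c i)) else None.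
Proof. by case: m; rewrite /= /lid /lsgn /= eq_sym; case: eqP. Qed.

Lemma walk_R3_bottom c c' m b j k si sj sk xt xm y :
  (si == sj) = (m == b) -> c j = xt -> c' j = xt ->
  c k = (if m then op si xm xt else xm) -> c' k = (if m then xm else op si xm xt) ->
  walk c (ord2 b (j, false, sj) (k, false, sk)) y =
  walk c' (ord2 (~~ b) (j, false, sj) (k, false, sk)) y.
Proof.
move=> Hs Ej Ej'; case: m b Hs => [] [] Hs;
  rewrite /= /lid /lsgn /= Ej Ej' => -> ->; case: si sj Hs => [] [] // _; congr Some.
all: first [by rewrite [LHS]opD ?(opK true) ?(opK false)
           | by rewrite [RHS]opD ?(opK true) ?(opK false)].
Qed.

Lemma colorable_R3_forward T i j k si sj sk t m b :
  holes_ok T 3 -> fresh T [:: i; j; k] -> (si == sj) = (m == b) ->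
  colorable (fill T (r3_words i j k si sj sk t m b)) ->
  colorable (fill T (r3_words i j k si sj sk (~~ t) (~~ m) (~~ b))).
Proof.
move=> Hh Hf Hs [c [a [Hv Hnm]]].
have /= := Hf.1; rewrite !inE !negb_or => /andP [/andP [_ Hik] /andP [Hjk _]].
have [xt [Ht Hut]] := holes_ok_hole_color Hv Hh (isT : 0 < 3).
have [xm [Hm Hum]] := holes_ok_hole_color Hv Hh (isT : 1 < 3).
have [yt] := hole_color_walk Hv Ht; rewrite -[nth _ _ 0]/(ord2 t _ _).
rewrite walk_over ?all_ord2; last by case: (t).
rewrite /lid /=.
case: eqP => // Eci; case: eqP => // Ecj _.
have [ym] := hole_color_walk Hv Hm; rewrite -[nth _ _ 1]/(ord2 m _ _) walk_R3_mid Eci.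
case: eqP => // Eck _.
pose c2 x := if x == k then (if m then xm else op si xm xt) else c x.
apply: (colorable_fill (c2 := c2) _ _ Hv Hnm).
- by move=> l /(fresh_letter Hf); rewrite !inE /c2 => /norP [_ /norP [_ /negPf ->]].
- move=> h y Hy; have := hole_color_lt Hh Hy; case: h Hy => [|[|[|]]] // Hy _.
  + rewrite -[nth _ _ 0]/(ord2 t _ _) -[nth _ _ 0]/(ord2 (~~ t) _ _).
    rewrite !walk_over ?all_ord2 //; try by case: (t).
    by rewrite /c2 /lid /= (negPf Hik) (negPf Hjk).
  + rewrite -[nth _ _ 1]/(ord2 m _ _) -[nth _ _ 1]/(ord2 (~~ m) _ _).
    rewrite (Hum _ Hy) !walk_R3_mid /c2 eqxx (negPf Hik) Eck Eci.
    by case: (m); rewrite !eqxx.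
  + rewrite -[nth _ _ 2]/(ord2 b _ _) -[nth _ _ 2]/(ord2 (~~ b) _ _).
    apply: (@walk_R3_bottom c c2 m b j k si sj sk xt xm y Hs Ecj) => //.
      by rewrite /c2 (negPf Hjk).
    by rewrite /c2 eqxx.
- move=> z Hz h l _ Hl; move: Eci Ecj Eck; rewrite (Hz _ _ Ht) (Hz _ _ Hm) => Eci Ecj Eck.
  have Ec3 : {in [:: i; j; k], forall x, c x = z}.
    by move=> x; rewrite !inE => /or3P [] /eqP ->; rewrite // Eck; case: (m); rewrite ?opI.
  apply: Ec3; move: Hl; case: h => [|[|[|h]]]; rewrite /= ?nth_nil ?mem_ord2 //;
    by move=> /orP [] /eqP -> /=; rewrite !inE eqxx ?orbT.
Qed.

Lemma colorable_R3 D D' : R3_move D D' -> colorable D <-> colorable D'.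
Proof.
move=> [T [i [j [k [si [sj [sk [t [m [b [Hh [Hf [Hs [_ [-> ->]]]]]]]]]]]]]]].
split; first exact: colorable_R3_forward.
rewrite -{2}[t]negbK -{2}[m]negbK -{2}[b]negbK; apply: colorable_R3_forward => //.
by rewrite Hs; case: (m); case: (b).
Qed.

Lemma colorable_OC_forward T x y : holes_ok T 1 -> lover x -> lover y ->
  colorable (fill T [:: [:: x; y]]) -> colorable (fill T [:: [:: y; x]]).
Proof.
move=> Hh Hx Hy [c [a [Hv Hnm]]].
have [y0 [Hy0 _]] := holes_ok_hole_color Hv Hh (ltn0Sn 0).
have [y1] := hole_color_walk Hv Hy0; rewrite /= Hx Hy.
case: eqP => // Ex; case: eqP => // Ey _.
apply: (colorable_fill (c2 := c) _ _ Hv Hnm) => //.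
- move=> k y' Hk; have := hole_color_lt Hh Hk; case: k Hk => // Hk _.
  by rewrite /= Hx Hy; case: eqP; case: eqP.
- move=> z Hz [|k] l _ /=; last by rewrite nth_nil.
  by rewrite (Hz _ _ Hy0) in Ex Ey; rewrite !inE => /orP [] /eqP ->.
Qed.

Lemma colorable_OC D D' : OC_move D D' -> colorable D <-> colorable D'.
Proof.
by move=> [T [x [y [Hh [Hx [Hy [_ [-> ->]]]]]]]]; split; apply: colorable_OC_forward.
Qed.

Lemma walk_under_same c s l y y0 : {in l, forall i, c i = y0} ->
  walk c [seq (i, false, s) | i <- l] y = Some (iter (size l) (fun w => op s w y0) y).
Proof.
elim: l y => //= i l IH y H; rewrite /lid /lsgn /= H ?mem_head // IH -?iterSr //.
by move=> i' Hi'; apply: H; rewrite inE Hi' orbT.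
Qed.

Variable n : nat.
Hypothesis opN : forall s x y, iter n (fun w => op s w y) x = x.

Lemma colorable_Vn D D' : Vn_move n D D' -> colorable D <-> colorable D'.
Proof.
move=> [T [s [l [Hh [Hs [Hf [-> ->]]]]]]].
have all_over : all lover [seq (i, true, s) | i <- l] by rewrite all_map; apply/allP.
split=> -[c [a [Hv Hnm]]]; have [y0 [Hy0 Hu]] := holes_ok_hole_color Hv Hh (ltn0Sn 1).
- apply: (colorable_fill (c2 := fun j => if j \in l then y0 else c j) _ _ Hv Hnm).
  + by move=> l' /(fresh_letter Hf) /negPf ->.
  + move=> k y Hk; have := hole_color_lt Hh Hk; case: k Hk => [|[|]] // Hk _.
      rewrite (Hu _ Hk) /= walk_over //; case: allP => // -[_ /mapP [i Hi ->]].
      by rewrite /lid /= Hi eqxx.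
    by rewrite (nth_empty_holes 2) /= (@walk_under_same _ _ _ _ y0) ?Hs ?opN // => i ->.
  + by move=> z _ k l' _; rewrite (nth_empty_holes 2).
- have [y1] := hole_color_walk Hv Hy0; rewrite /= walk_over //; case: allP => // Hall _.
  have Hl : {in l, forall i, c i = y0} by move=> i /(map_f (fun i => (i, true, s))) /Hall /eqP.
  apply: (colorable_fill (c2 := c) _ _ Hv Hnm) => //.
  + move=> k y Hk; have := hole_color_lt Hh Hk; case: k Hk => [|[|]] // Hk _.
      by rewrite (Hu _ Hk) /= walk_over //; case: allP.
    by rewrite (nth_empty_holes 2) /= (walk_under_same _ _ Hl) Hs opN.
  + move=> z Hz [|[|k]] l' _ /=; rewrite ?nth_nil // => /mapP [i Hi ->];
      by rewrite -(Hz _ _ Hy0); apply: Hl.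
Qed.

Lemma colorable_wVn_step D D' : wVn_step n D D' -> colorable D <-> colorable D'.
Proof.
case=> _ [_ [|[|[|[|[|[|]]]]]]].
- exact: colorable_rot.
- exact: colorable_relabel.
- exact: colorable_R1.
- exact: colorable_R2.
- exact: colorable_R3.
- exact: colorable_OC.
- exact: colorable_Vn.
Qed.

Lemma colorable_wVn_equiv D D' :
  clos_refl_sym_trans gdiag (wVn_step n) D D' -> colorable D <-> colorable D'.
Proof.
elim=> [x y /colorable_wVn_step|x|x y _ [H1 H2]|x y z _ [H1 H2] _ [H3 H4]] //; tauto.
Qed.

End Colorings.

Section UnderCrossingChange.
Variables (T : template) (i : nat) (s : bool) (y : letter).
Hypothesis T_hole : holes_ok T 1.
Hypothesis y_id : lid y != i.

Local Notation word b := (if b then [:: (i, false, s); y] else [:: y; (i, false, s)]).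
Local Notation D := (fill T [:: word true]).
Local Notation D_minus := (map (filter (fun l => lid l != i)) D).

Hypothesis D_wf : gauss_wf D.

Lemma template_hole k : inr k \in flatten T -> k = 0.
Proof. by rewrite (holes_ok_mem _ T_hole); case: k. Qed.

Lemma template_hole0 : inr 0 \in flatten T.
Proof. by rewrite (holes_ok_mem _ T_hole). Qed.

Lemma crossing_wf :
  [/\ count (fun l => (lid l == i) && lover l) (flatten D) = 1,
      count (fun l => (lid l == i) && ~~ lover l) (flatten D) = 1
    & forall w, w \in flatten D -> lid w = i -> lsgn w = s].
Proof.
have Hx : (i, false, s) \in flatten D.
  by apply: (mem_fill_hole template_hole0); rewrite /= mem_head.
have [Cov [Cun Csg]] := D_wf (map_f lid Hx).
by split=> // w Hw Hwi; apply: (Csg w _ Hw Hx).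
Qed.

Lemma template_letter_id w : inl w \in flatten T -> lid w = i -> w = (i, true, s).
Proof.
move=> Hw Hwi; have [_ Cun Csg] := crossing_wf.
case Hwo: (lover w).
  by rewrite [w]letterE Hwi Hwo Csg // mem_fill_letter.
have := count_flatten_map2 (fill_entry [:: word true])
  (fun l => (lid l == i) && ~~ lover l) Hw template_hole0 isT.
by rewrite -flatten_fill Cun /= Hwi Hwo eqxx.
Qed.

Lemma template_over_count : count (pred1 (inl (i, true, s))) (flatten T) = 1.
Proof.
have [Cov _ _] := crossing_wf; rewrite -Cov flatten_fill.
symmetry; apply: count_flatten_map => -[w|k] He /=; last first.
  by rewrite (template_hole He) /= /lid /= eqxx (negPf y_id).
rewrite addn0; case: eqP => [/template_letter_id -> //|Hwi]; first by rewrite eqxx.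
by case: eqP => // -[Ew]; case: Hwi; rewrite Ew.
Qed.

(* [T] with the over-endpoint of crossing [i] turned into hole 0, and hole 1
   put before [y] if [b], after it otherwise. *)
Definition crossing_template (b : bool) : template :=
  tsub (fun e => match e with
    | inl w => if w == (i, true, s) then [:: inr 0] else [:: inl w]
    | inr _ => if b then [:: inr 1; inl y] else [:: inl y; inr 1] end) T.

Lemma crossing_template_holes b : holes_ok (crossing_template b) 2.
Proof.
split=> [[|[|h]] // _|h]; rewrite flatten_tsub.
- apply: (etrans _ template_over_count); apply: count_flatten_map => -[w|k] He /=.
    by case: eqP => [->|Hw] /=; rewrite ?eqxx //; case: eqP => // -[/Hw].
  by case: (b).
- apply: (etrans _ (proj1 T_hole 0 isT)); apply: count_flatten_map => -[w|k] He /=.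
    by case: (w == _).
  by rewrite (template_hole He); case: (b).
- case/flatten_mapP => -[w|k] _ /=; first by case: (w == _); rewrite !inE // => /eqP [<-].
  by case: (b); rewrite !inE => /orP [] /eqP // [<-].
Qed.

Lemma crossing_template_fresh b : fresh (crossing_template b) [:: i].
Proof.
split=> //=; rewrite andbT; apply/negP => /mapP [l Hl /esym Eli].
case: (mem_fill Hl) => [|[k _]]; last by rewrite nth_nil.
rewrite flatten_tsub => /flatten_mapP [[w|k] He] /=.
  case: eqP => [_|Hne]; first by rewrite inE.
  by rewrite inE => /eqP [Ew]; apply: Hne; apply: template_letter_id; rewrite // -Ew.
by case: (b); rewrite !inE => /orP [] /eqP // [El]; move: y_id; rewrite -El Eli eqxx.
Qed.

Lemma fill_crossing_template b :
  fill (crossing_template b) [:: [:: (i, true, s)]; [:: (i, false, s)]] = fill T [:: word b].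
Proof.
rewrite fill_tsub fillE; apply/eq_in_map => t Ht /=; congr flatten; apply/eq_in_map => e He /=.
case: e He => [w|k] He; first by case: eqP => [->|].
by rewrite (template_hole (k := k)) //; [case: (b) | apply/flattenP; exists t].
Qed.

Lemma erase_crossing_template b : fill (crossing_template b) [:: [::]; [::]] = D_minus.
Proof.
rewrite fill_tsub fillE -map_comp; apply/eq_in_map => t Ht /=.
rewrite /fill_comp filter_flatten -map_comp; congr flatten; apply/eq_in_map => e He /=.
have HeT : e \in flatten T by apply/flattenP; exists t.
case: e He HeT => [w|k] _ HeT /=.
  case: eqP => [->|Hne]; first by rewrite /lid /= eqxx.
  by case: eqP => // Hwi; case: Hne; apply: template_letter_id.
by rewrite (template_hole HeT) /= /lid /= eqxx y_id; case: (b).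
Qed.

Lemma wV1_step_insert_crossing b :
  gauss_wf (fill T [:: word b]) -> wVn_step 1 D_minus (fill T [:: word b]).
Proof.
move=> wf; split; first exact: gauss_wf_filter.
split=> //; do 6 right; exists (crossing_template b), s, [:: i].
split; first exact: crossing_template_holes.
split=> //; split; first exact: crossing_template_fresh.
by rewrite erase_crossing_template fill_crossing_template.
Qed.

End UnderCrossingChange.

Lemma UC_realized_by_wV1 : UC_realized_by_wVn 1.
Proof.
move=> D D' [wfD [wfD' [T [x [y [Hh [Hx [Hy [Hxy [ED ED']]]]]]]]]]; subst D D'.
move: Hx Hxy wfD wfD'; rewrite [x]letterE; case: (lover x) => // _.
move: (lid x) (lsgn x) => i s; rewrite eq_sym => y_id wfD wfD'.
have step b := wV1_step_insert_crossing Hh y_id wfD (b := b).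
exact: rst_trans _ _ _ _ _ (rst_sym _ _ _ _ (rst_step _ _ _ _ (step true wfD)))
  (rst_step _ _ _ _ (step false wfD')).
Qed.

Import GRing.Theory.

Section AlexanderQuandle.
Local Open Scope ring_scope.
Variables (R : comNzRingType) (t t' : R).
Hypothesis tt' : t * t' = 1.

Definition alex_scale (s : bool) : R := if s then t else t'.

Definition alex_op (s : bool) (x y : R) : R := alex_scale s * x + (1 - alex_scale s) * y.

Lemma alex_opI s x : alex_op s x x = x.
Proof. by rewrite /alex_op; ring. Qed.

Lemma alex_opK s x y : alex_op (~~ s) (alex_op s x y) y = x.
Proof.
have tK : alex_scale (~~ s) * alex_scale s = 1 by case: s; rewrite //= mulrC.
rewrite /alex_op.
have -> : alex_scale (~~ s) * (alex_scale s * x + (1 - alex_scale s) * y) +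
    (1 - alex_scale (~~ s)) * y =
  alex_scale (~~ s) * alex_scale s * x + (1 - alex_scale (~~ s) * alex_scale s) * y by ring.
by rewrite tK; ring.
Qed.

Lemma alex_opD d e x z y :
  alex_op e (alex_op d x z) y = alex_op d (alex_op e x y) (alex_op e z y).
Proof. by rewrite /alex_op; ring. Qed.

Lemma iter_alex_op s k x y :
  iter k (fun w => alex_op s w y) x = alex_scale s ^+ k * x + (1 - alex_scale s ^+ k) * y.
Proof. by elim: k => [|k IH] /=; rewrite ?IH /alex_op ?exprS; ring. Qed.

Lemma iter_alex_op_id n : t ^+ n = 1 -> forall s x y, iter n (fun w => alex_op s w y) x = x.
Proof.
move=> tn s x y; have Hn : alex_scale s ^+ n = 1.
  by case: s => //=; rewrite -(mul1r (t' ^+ n)) -tn -exprMn tt' expr1n.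
by rewrite iter_alex_op Hn; ring.
Qed.

End AlexanderQuandle.

Definition uc_left : gdiag :=
  [:: [:: (0, true, true); (1, false, true); (2, false, true); (3, false, false);
          (4, false, false)];
      [:: (1, true, true); (3, true, false); (0, false, true)];
      [:: (2, true, true); (4, true, false)]].

Definition uc_right : gdiag :=
  [:: [:: (0, true, true); (1, false, true); (3, false, false); (2, false, true);
          (4, false, false)];
      [:: (1, true, true); (3, true, false); (0, false, true)];
      [:: (2, true, true); (4, true, false)]].

Definition gauss_wfb (D : gdiag) : bool :=
  all (fun i => [&& count (fun x => (lid x == i) && lover x) (flatten D) == 1,
     count (fun x => (lid x == i) && ~~ lover x) (flatten D) == 1 &
     all (fun x => all (fun y => (lid x == i) ==> (lid y == i) ==> (lsgn x == lsgn y))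
        (flatten D)) (flatten D)]) (ids D).

Lemma gauss_wfbW D : gauss_wfb D -> gauss_wf D.
Proof.
move/allP => H i /H /and3P [/eqP H1 /eqP H2 /allP H3]; split=> //; split=> // x y Hx Hy Ex Ey.
by have := allP (H3 x Hx) y Hy; rewrite Ex Ey eqxx => /eqP.
Qed.

Lemma UC_step_uc : UC_step uc_left uc_right.
Proof.
split; first exact: gauss_wfbW.
split; first exact: gauss_wfbW.
exists [:: [:: inl (0, true, true); inl (1, false, true); inr 0; inl (4, false, false)];
           map inl (nth [::] uc_left 1); map inl (nth [::] uc_left 2)].
by exists (2, false, true), (3, false, false); split=> //; split=> -[|h].
Qed.

Section UCInvariant.
Local Open Scope ring_scope.
Variables (R : comNzRingType) (h : R).
Hypothesis two_h : 2 * h = 1.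

Lemma colorable_uc_right : colorable (alex_op 2 h) uc_right.
Proof.
exists (fun i => if i \in [:: 2; 4]%N then 1 else 0), (fun k => if k == 2%N then 1 else 0).
split.
  move=> [|[|[|k]]] // _; rewrite /= /lid /lover /lsgn /= ?eqxx ?alex_opI //.
  by rewrite -[false]/(~~ true) (alex_opK two_h).
move=> [z [Ha _]]; have := Ha 0%N isT; have := Ha 2%N isT; rewrite /= => <-.
by move/eqP; rewrite eq_sym oner_eq0.
Qed.

Lemma not_colorable_uc_left : ~ colorable (alex_op 2 h) uc_left.
Proof.
move=> [c [a [Hv Hnm]]]; apply: Hnm.
have := Hv 0%N isT; have := Hv 1%N isT; have := Hv 2%N isT; rewrite /= /lid /lover /lsgn /=.
case: eqP => // E2; case: eqP => // E4 _.
case: eqP => // E1; case: eqP => // E3 [HB].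
case: eqP => // E0 [HA].
have Ec0 : c 0%N = a 1%N.
  transitivity (2 * a 1%N - alex_op 2 h true (a 1%N) (c 0%N)).
    by rewrite /alex_op /alex_scale; ring.
  by rewrite HB; ring.
move: HA; rewrite E0 Ec0 -E1 -E3 -E2 -E4 alex_opI.
set u := a 1%N; set v := a 2%N => HA.
(* Since [2 h = 1], [HA] says [(3 u + v) / 4 = u]. *)
have Evu : v = u.
  apply/eqP; rewrite -subr_eq0.
  have -> : v - u = 4 * (alex_op 2 h false (alex_op 2 h false (alex_op 2 h true u v) u) v - u)
      + (2 * h - 1) * ((2 * h + 3) * (v - u)) by rewrite /alex_op /alex_scale; ring.
  by rewrite HA two_h !subrr mulr0 mul0r addr0.
exists u; split; first by move=> [|[|[|k]]] // _; rewrite /= ?E0 ?Ec0.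
move=> i; rewrite /ids /= !inE.
by do ![move=> /orP []] => /eqP ->; rewrite ?Ec0 -?E1 -?E2 -?E3 -?E4 // Evu.
Qed.

End UCInvariant.

Section LargeN.
Local Open Scope ring_scope.

Lemma Zp_two_expn n : (1 < n)%N -> (2 : 'Z_((2 ^ n).-1)) ^+ n = 1.
Proof.
move=> Hn; have Hp : (1 < (2 ^ n).-1)%N.
  have : (2 ^ 2 <= 2 ^ n)%N by rewrite leq_exp2l.
  by case: (2 ^ n)%N => [|[|[|]]].
have -> : (2 : 'Z_((2 ^ n).-1)) ^+ n = ((2 ^ n).-1 + 1)%N%:R.
  by rewrite addn1 prednK ?expn_gt0 // natrX.
by rewrite natrD (pchar_Zp Hp) add0r.
Qed.

Lemma UC_not_realized_by_wVn n : (1 < n)%N -> ~ UC_realized_by_wVn n.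
Proof.
move=> Hn HUC; pose h : 'Z_((2 ^ n).-1) := 2 ^+ n.-1.
have two_n := Zp_two_expn Hn.
have two_h : 2 * h = 1 by rewrite /h -exprS prednK // ltnW.
have [_] := colorable_wVn_equiv (alex_opI 2 h) (alex_opK two_h) (alex_opD 2 h)
  (iter_alex_op_id two_h two_n) (HUC _ _ UC_step_uc).
by move=> /(_ (colorable_uc_right two_h)); apply: not_colorable_uc_left.
Qed.

End LargeN.

Theorem corollary5p3 (n : nat) (hn : 0 < n) : UC_realized_by_wVn n <-> n = 1.
Proof.
split=> [|-> //]; last exact: UC_realized_by_wV1.
by case: n hn => [|[|n]] // _ /(UC_not_realized_by_wVn (isT : 1 < n.+2)).
Qed.
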